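(* Let $(\mathcal{O},g,f)$ be an oriented matroid program with $\mathcal{O}$ of rank $r\ge 3$, and let $(C,X,Y)$ be a modular triple of cocircuits such that $z(C\circ X\circ Y)$ is a flat of rank $r-3$ of $\mathcal{M}(\mathcal{O})$, with $C_g=X_g=Y_g=+$. Let $e\in\operatorname{supp}(C)$ with $(X\circ Y)_e=0$. Let $X^1$ be obtained by cocircuit elimination of $g$ between $-X$ and $C$, and $Y^1$ by cocircuit elimination of $g$ between $-Y$ and $C$. Then $X^1\circ Y^1$ is an edge, and $X\to_{g,f}Y \iff Y^1\to_{e,f}X^1 \iff -X^1\to_{e,f}-Y^1.$
   Context: Oriented matroid $\mathcal{O}$ of rank $r$ on finite $E$, given by its cocircuits (sign vectors in $\{+,-,0\}^E$), underlying matroid $\mathcal{M}(\mathcal{O})$. Notation: $\operatorname{supp}(X)$, $z(X)=E\setminus\operatorname{supp}(X)$, $\operatorname{sep}(X,Y)=\{e:X_e=-Y_e\ne0\}$, $(X\circ Y)_e=X_e$ if $X_e\ne0$, else $Y_e$. An edge is a covector whose zero set is a flat of rank $r-2$; cocircuits $X\ne\pm Y$ are comodular if $X\circ Y$ is an edge. A modular triple of cocircuits $(C,X,Y)$ is one in which each of the three pairs is comodular. For comodular $X,Y$ and $e\in\operatorname{sep}(X,Y)$, cocircuit elimination of $e$ between $X$ and $Y$ yields the unique cocircuit $Z$ with $Z_e=0$ and $Z_h=(X\circ Y)_h$ for $h\notin\operatorname{sep}(X,Y)$. An oriented matroid program $(\mathcal{O},g,f)$: $g\neq f\in E$, $g$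 not a loop, $f$ not a coloop. For distinct $a,b\in E$ and comodular $X,Y$ with $X_a=Y_a\ne0$, let $Z$ be obtained by eliminating $a$ between $-X$ and $Y$; write $X\to_{a,b}Y$ if $Z_b=+$, $X\leftarrow_{a,b}Y$ if $Z_b=-$, $X\leftrightarrow_{a,b}Y$ if $Z_b=0$. *)

From mathcomp Require Import all_boot.
Set Implicit Arguments. Unset Strict Implicit. Unset Printing Implicit Defensive.

Section OM.
Variable E : finType.

(* Signs: None = 0, Some true = +, Some false = - *)
Definition sv := {ffun E -> option bool}.

Definition zerov : sv := [ffun _ => None].
Definition opp (X : sv) : sv := [ffun e => omap negb (X e)].
Definition svcomp (X Y : sv) : sv :=
  [ffun e => if X e is Some b then Some b else Y e].
Definition supp (X : sv) : {set E} := [set e | X e != None].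
Definition zs (X : sv) : {set E} := ~: supp X.
Definition sep (X Y : sv) : {set E} :=
  [set e | (X e != None) && (X e == omap negb (Y e))].

Definition is_OM (Cs : {set sv}) : Prop :=
  [/\ zerov \notin Cs,
      (forall X, X \in Cs -> opp X \in Cs),
      (forall X Y, X \in Cs -> Y \in Cs -> supp X \subset supp Y ->
          X = Y \/ X = opp Y) &
      (forall X Y e, X \in Cs -> Y \in Cs -> X <> opp Y -> e \in sep X Y ->
          exists2 Z, Z \in Cs &
            [/\ Z e = None,
                (forall h, Z h = Some true -> X h = Some true \/ Y h = Some true) &
                (forall h, Z h = Some false -> X h = Some false \/ Y h = Some false)])].

(* Underlying matroid M(O): its cocircuits are the supports of the cocircuits
   of O, i.e. its hyperplanes are the zero sets of cocircuits.
   closure A = intersection of all hyperplanes containing A. *)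
Definition closure (Cs : {set sv}) (A : {set E}) : {set E} :=
  \bigcap_(X in Cs | A \subset zs X) zs X.
Definition indep (Cs : {set sv}) (I : {set E}) : bool :=
  [forall x in I, x \notin closure Cs (I :\ x)].
Definition rank (Cs : {set sv}) (A : {set E}) : nat :=
  \max_(I : {set E} | (I \subset A) && indep Cs I) #|I|.
Definition flat (Cs : {set sv}) (F : {set E}) : bool := closure Cs F == F.
Definition rankOM (Cs : {set sv}) : nat := rank Cs setT.
Definition is_basis (Cs : {set sv}) (B : {set E}) : bool :=
  indep Cs B && [forall I : {set E}, (indep Cs I && (B \subset I)) ==> (I == B)].
Definition loop (Cs : {set sv}) (x : E) : Prop := ~~ indep Cs [set x].
Definition coloop (Cs : {set sv}) (x : E) : Prop :=
  forall B, is_basis Cs B -> x \in B.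

Definition covector (Cs : {set sv}) (V : sv) : Prop :=
  exists s : seq sv, all (fun X => X \in Cs) s /\ V = foldr svcomp zerov s.
Definition edge (Cs : {set sv}) (V : sv) : Prop :=
  covector Cs V /\ flat Cs (zs V) /\ rank Cs (zs V) = rankOM Cs - 2.
Definition comodular (Cs : {set sv}) (X Y : sv) : Prop :=
  [/\ X \in Cs, Y \in Cs, X <> Y, X <> opp Y & edge Cs (svcomp X Y)].

Definition elim_result (Cs : {set sv}) (a : E) (X Y Z : sv) : Prop :=
  [/\ Z \in Cs, Z a = None &
      forall h, h \notin sep X Y -> Z h = svcomp X Y h].

Definition arrow (Cs : {set sv}) (a b : E) (X Y : sv) : Prop :=
  [/\ comodular Cs X Y, X a = Y a, X a <> None &
      exists Z, elim_result Cs a (opp X) Y Z /\ Z b = Some true].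

End OM.

From Pilot Require Import Defs.
From mathcomp Require Import all_boot zify.
Set Implicit Arguments. Unset Strict Implicit. Unset Printing Implicit Defensive.

(* The argument takes place in pencils of cocircuits through colines (flats of rank
   r - 2): two cocircuits vanishing on a coline L and at a common point outside L agree
   up to sign.  This yields the elimination cocircuit of a comodular pair, with the
   prescribed signs off the separator.  Rank is strictly monotone along flats (in the
   hyperplane presentation of M(O) this rests on strong elimination for supports).
   X^1 and Y^1 vanish on F = z(C o X o Y) and at g.  Moreover z(X^1) <> z(Y^1): otherwise
   X^1 would share with C a zero off the coline z(C o X), namely a point of z(C o Y)
   outside F, and so equal +-C, which fails at g.  Hence r - 3 < rank (z(X^1) :&: z(Y^1))
   < r - 1, i.e. X^1 o Y^1 is an edge.  The eliminations of g between -X and Y and of e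
   between -Y^1 and X^1 both lie in the pencil through z(X o Y) and vanish at g, hence
   agree up to sign, and the sign is read off at a point of z(C o X) outside F.  The
   last equivalence is the symmetry of arrows under (X, Y) |-> (-Y, -X). *)

Section SignVectors.
Variable E : finType.
Implicit Types (X Y Z : sv E).

Lemma in_supp X x : (x \in supp X) = (X x != None).
Proof. by rewrite inE. Qed.

Lemma in_zs X x : (x \in zs X) = (X x == None).
Proof. by rewrite !inE negbK. Qed.

Lemma in_zs_supp X x : (x \in zs X) = (x \notin supp X).
Proof. by rewrite inE. Qed.

Lemma oppE X x : opp X x = omap negb (X x).
Proof. by rewrite ffunE. Qed.

Lemma oppK X : opp (opp X) = X.
Proof. by apply/ffunP => x; rewrite !oppE; case: (X x) => // -[]. Qed.

Lemma svcompE X Y x : svcomp X Y x = if X x is Some b then Some b else Y x.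
Proof. by rewrite ffunE. Qed.

Lemma supp_opp X : supp (opp X) = supp X.
Proof. by apply/setP => x; rewrite !in_supp oppE; case: (X x). Qed.

Lemma zs_opp X : zs (opp X) = zs X.
Proof. by rewrite /zs supp_opp. Qed.

Lemma zs_svcomp X Y : zs (svcomp X Y) = zs X :&: zs Y.
Proof. by apply/setP => x; rewrite in_setI !in_zs svcompE; case: (X x). Qed.

Lemma svcompX0 X : svcomp X (zerov E) = X.
Proof. by apply/ffunP => x; rewrite svcompE ffunE; case: (X x). Qed.

Lemma in_sep X Y x : (x \in sep X Y) = (X x != None) && (X x == omap negb (Y x)).
Proof. by rewrite inE. Qed.

Lemma sep_sym X Y : sep X Y = sep Y X.
Proof. by apply/setP => h; rewrite !in_sep; case: (X h) => [[]|]; case: (Y h) => [[]|]. Qed.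

Lemma sep_neq0 X Y a : a \in sep X Y -> X a <> None /\ Y a <> None.
Proof. by rewrite in_sep; case: (X a) => [[]|]; case: (Y a) => [[]|]. Qed.

Lemma zero_neq Z X a : Z a = None -> X a <> None -> Z <> X /\ Z <> opp X.
Proof. by move=> Za Xa; split=> ZX; apply: Xa; rewrite -1?[X]oppK -ZX ?oppE Za. Qed.

Definition conformal Z X Y :=
  forall h u, Z h = Some u -> X h = Some u \/ Y h = Some u.

Lemma conformal_zero Z X Y h : conformal Z X Y -> X h = None -> Y h = None -> Z h = None.
Proof. by move=> cf Xh Yh; case Zh: (Z h) => [u|] //; case: (cf _ _ Zh); rewrite ?Xh ?Yh. Qed.

Lemma conformal_supp Z X Y : conformal Z X Y -> supp Z \subset supp X :|: supp Y.
Proof.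
move=> cf; apply/subsetP => h; rewrite in_setU !in_supp.
by case Zh: (Z h) => [u|] // _; case: (cf _ _ Zh) => ->; rewrite ?orbT.
Qed.

Lemma conformal_zs X Y Z : conformal Z X Y -> zs X :&: zs Y \subset zs Z.
Proof.
move=> cf; apply/subsetP => h; rewrite in_setI !in_zs => /andP [/eqP Xh /eqP Yh].
by rewrite (conformal_zero cf Xh Yh).
Qed.

Lemma conformal_sym Z X Y : conformal Z X Y -> conformal Z Y X.
Proof. by move=> cf h u /cf []; [right | left]. Qed.

End SignVectors.

Section Closure.
Variables (E : finType) (Cs : {set sv E}).
Implicit Types (D : sv E) (S T : {set E}).

Lemma sub_closure S : S \subset Defs.closure Cs S.
Proof. by apply/subsetP => x xS; apply/bigcapP => D /andP [_ /subsetP]; apply. Qed.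

Lemma closure_sub_zs S D : D \in Cs -> S \subset zs D -> Defs.closure Cs S \subset zs D.
Proof. by move=> DC SD; apply: (bigcap_min D) => //; rewrite DC. Qed.

Lemma closureS S T : S \subset T -> Defs.closure Cs S \subset Defs.closure Cs T.
Proof.
move=> ST; apply/subsetP => x /bigcapP H; apply/bigcapP => D /andP [DC TD].
by apply: H; rewrite DC (subset_trans ST TD).
Qed.

Lemma notin_closure S y : y \notin Defs.closure Cs S ->
  exists2 D, D \in Cs & (S \subset zs D) && (y \notin zs D).
Proof.
move=> yS; case: (pickP [pred D | [&& D \in Cs, S \subset zs D & y \notin zs D]]).
  by move=> D /and3P [DC SD yD]; exists D; rewrite ?SD.
move=> none; case/negP: yS; apply/bigcapP => D /andP [DC SD].
by move: (none D) => /=; rewrite DC SD => /negbFE.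
Qed.

Lemma flat_zs D : D \in Cs -> flat Cs (zs D).
Proof. by move=> DC; rewrite /flat eqEsubset sub_closure closure_sub_zs. Qed.

Lemma flatI S D : flat Cs S -> D \in Cs -> flat Cs (S :&: zs D).
Proof.
move=> /eqP fS DC; rewrite /flat eqEsubset sub_closure andbT subsetI.
by rewrite closure_sub_zs ?subsetIr // -{2}fS closureS ?subsetIl.
Qed.

Lemma flatT : flat Cs setT.
Proof. by rewrite /flat eqEsubset subsetT sub_closure. Qed.

Definition coline L := flat Cs L /\ rank Cs L = rankOM Cs - 2.

End Closure.

Section Elimination.
Variables (E : finType) (Cs : {set sv E}).
Implicit Types (X Y Z : sv E).

Lemma elim_result_zs_left a X Y Z h :
  elim_result Cs a X Y Z -> X h = None -> Z h = Y h.
Proof. by case=> _ _ ZXY Xh; rewrite ZXY ?svcompE ?Xh // in_sep Xh. Qed.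

Lemma elim_result_zs_right a X Y Z h :
  elim_result Cs a X Y Z -> Y h = None -> Z h = X h.
Proof.
case=> _ _ ZXY Yh; rewrite ZXY ?svcompE ?Yh; first by case: (X h).
by rewrite in_sep Yh; case: (X h).
Qed.

Lemma elim_result_sym a X Y Z : elim_result Cs a X Y Z -> elim_result Cs a Y X Z.
Proof.
case=> ZC Za ZXY; split => // h; rewrite sep_sym => hS; rewrite ZXY //.
move: hS; rewrite in_sep !svcompE.
by case: (X h) => [[]|]; case: (Y h) => [[]|].
Qed.

End Elimination.

Section Cocircuits.
Variables (E : finType) (Cs : {set sv E}).
Hypothesis HOM : is_OM Cs.
Implicit Types (X Y Z D : sv E) (S T J : {set E}).

Lemma opp_cocircuit X : X \in Cs -> opp X \in Cs.
Proof. by case: HOM => _ H _ _; apply: H. Qed.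

Lemma cocircuit_supp_eq X Y : X \in Cs -> Y \in Cs -> supp X \subset supp Y ->
  X = Y \/ X = opp Y.
Proof. by case: HOM => _ _ H _; apply: H. Qed.

Lemma cocircuit_supp_min X Y : X \in Cs -> Y \in Cs -> supp X \subset supp Y ->
  supp X = supp Y.
Proof. by move=> XC YC /(cocircuit_supp_eq XC YC) [->|->]; rewrite ?supp_opp. Qed.

Lemma cocircuit_supp_neq0 X : X \in Cs -> exists x, x \in supp X.
Proof.
case: HOM => X0 _ _ _ XC; case: (pickP (mem (supp X))) => [x xX|none]; first by exists x.
case/negP: X0; suff -> : zerov E = X by [].
by apply/ffunP => x; rewrite ffunE; move: (none x); rewrite /= in_supp; case: (X x).
Qed.

Lemma cocircuit_elim X Y e : X \in Cs -> Y \in Cs -> X <> opp Y -> e \in sep X Y ->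
  exists2 Z, Z \in Cs & Z e = None /\ conformal Z X Y.
Proof.
case: HOM => _ _ _ H XC YC nXY eS; have [Z ZC [Ze Zp Zn]] := H X Y e XC YC nXY eS.
by exists Z => //; split=> // h [] Zh; [apply: Zp | apply: Zn].
Qed.

Lemma supp_weak_elim X Y x : X \in Cs -> Y \in Cs -> supp X != supp Y ->
  x \in supp X -> x \in supp Y ->
  exists2 Z, Z \in Cs & supp Z \subset (supp X :|: supp Y) :\ x.
Proof.
move=> XC YC neXY; rewrite !in_supp.
case Xx: (X x) => [b|] // _; case Yx: (Y x) => [c|] // _.
suff [X' [X'C sX' nX'Y xS]] : exists X', [/\ X' \in Cs, supp X' = supp X,
    X' <> opp Y & x \in sep X' Y].
  have [Z ZC [Zx cf]] := cocircuit_elim X'C YC nX'Y xS.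
  exists Z => //; apply/subsetP => h hZ.
  rewrite in_setD1 -sX' (subsetP (conformal_supp cf)) // andbT.
  by apply: contraTneq hZ => ->; rewrite in_supp Zx.
have neq_opp X' : supp X' = supp X -> X' <> opp Y.
  by move=> sX' XY; move: neXY; rewrite -sX' XY supp_opp eqxx.
case: (boolP (b == ~~ c)) => [/eqP bc | bc].
  exists X; split=> //; first exact: neq_opp.
  by rewrite in_sep Xx Yx bc /= eqxx.
have sX' : supp (opp X) = supp X by rewrite supp_opp.
exists (opp X); split=> //; [exact: opp_cocircuit | exact: neq_opp |].
by rewrite in_sep oppE Xx Yx /=; move: bc; clear Xx Yx; case: b; case: c.
Qed.

Lemma supp_strong_elim_n n X Y x y : #|supp X :|: supp Y| <= n ->
  X \in Cs -> Y \in Cs -> x \in supp X -> x \in supp Y ->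
  y \in supp X -> y \notin supp Y ->
  exists2 Z, Z \in Cs & (y \in supp Z) && (supp Z \subset (supp X :|: supp Y) :\ x).
Proof.
elim: n X Y x y => [|n IH] X Y x y.
  rewrite leqn0 => /eqP/cards0_eq XY0 _ _ _ _ yX.
  by move/setP/(_ y): XY0; rewrite in_setU in_set0 yX.
move=> sizeXY XC YC xX xY yX yY.
have neXY : supp X != supp Y by apply: contraNneq yY => <-.
have [W WC sW] := supp_weak_elim XC YC neXY xX xY.
have sWXY : supp W \subset supp X :|: supp Y := subset_trans sW (subD1set _ _).
case: (boolP (y \in supp W)) => yW; first by exists W => //; rewrite yW.
have xW : x \notin supp W by apply/negP => /(subsetP sW); rewrite in_setD1 eqxx.
have [z zW zX] : exists2 z, z \in supp W & z \notin supp X.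
  apply/subsetPn; apply: contra xW => sWX.
  by rewrite (cocircuit_supp_min WC XC sWX).
have zY : z \in supp Y by move: (subsetP sWXY z zW); rewrite in_setU (negbTE zX).
have [V VC /andP [xV sV]] : exists2 V, V \in Cs &
    (x \in supp V) && (supp V \subset (supp Y :|: supp W) :\ z).
  apply: IH => //; rewrite -ltnS; apply: leq_trans sizeXY; apply: proper_card.
  rewrite properE subUset subsetUr sWXY /=; apply/subsetPn; exists y.
    by rewrite in_setU yX.
  by rewrite in_setU (negbTE yY) (negbTE yW).
have sVXY : supp V \subset supp X :|: supp Y.
  by rewrite (subset_trans sV) // (subset_trans (subD1set _ _)) // subUset subsetUr.
have yV : y \notin supp V.
  by apply/negP => /(subsetP sV); rewrite in_setD1 in_setU (negbTE yY) (negbTE yW) andbF.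
have zV : z \notin supp V by apply/negP => /(subsetP sV); rewrite in_setD1 eqxx.
have [U UC /andP [yU sU]] : exists2 U, U \in Cs &
    (y \in supp U) && (supp U \subset (supp X :|: supp V) :\ x).
  apply: IH => //; rewrite -ltnS; apply: leq_trans sizeXY; apply: proper_card.
  rewrite properE subUset subsetUl sVXY /=; apply/subsetPn; exists z.
    by rewrite in_setU zY orbT.
  by rewrite in_setU (negbTE zX) (negbTE zV).
exists U => //; rewrite yU (subset_trans sU) //.
by apply: setSD; rewrite subUset subsetUl.
Qed.

Lemma supp_strong_elim X Y x y : X \in Cs -> Y \in Cs -> x \in supp X -> x \in supp Y ->
  y \in supp X -> y \notin supp Y ->
  exists2 Z, Z \in Cs & (y \in supp Z) && (supp Z \subset (supp X :|: supp Y) :\ x).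
Proof. exact: supp_strong_elim_n. Qed.

Lemma closure_exchange J x y : y \in Defs.closure Cs (x |: J) ->
  y \notin Defs.closure Cs J -> x \in Defs.closure Cs (y |: J).
Proof.
move=> yxJ yJ; apply: contraT => /notin_closure [D1 D1C /andP [s1 xD1]].
have [D2 D2C /andP [s2 yD2]] := notin_closure yJ.
suff [D DC /andP [sD yD]] : exists2 D, D \in Cs & (x |: J \subset zs D) && (y \notin zs D).
  by move/bigcapP: yxJ => /(_ D); rewrite DC sD (negbTE yD) => /(_ isT).
case: (boolP (x \in zs D2)) => xD2.
  by exists D2 => //; rewrite yD2 subUset sub1set xD2 s2.
have yD1 : y \notin supp D1 by rewrite -in_zs_supp (subsetP s1) ?setU11.
rewrite !in_zs_supp !negbK in xD1 xD2 yD2.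
have [D3 D3C /andP [yD3 sD3]] := supp_strong_elim D2C D1C xD2 xD1 yD2 yD1.
exists D3 => //; rewrite in_zs_supp yD3 andbT subUset sub1set in_zs_supp.
apply/andP; split; first by apply/negP => /(subsetP sD3); rewrite in_setD1 eqxx.
apply/subsetP => j jJ; rewrite in_zs_supp; apply/negP => /(subsetP sD3).
have := subsetP s1 j; rewrite in_setU1 jJ orbT => /(_ isT); rewrite in_zs_supp => /negbTE jD1.
have := subsetP s2 j jJ; rewrite in_zs_supp => /negbTE jD2.
by rewrite in_setD1 in_setU jD1 jD2 andbF.
Qed.

Lemma ltn_rank_flat S T x : flat Cs S -> flat Cs T -> S \subset T ->
  x \in T -> x \notin S -> rank Cs S < rank Cs T.
Proof.
move=> /eqP fS fT ST xT xS.
pose P := [pred I : {set E} | (I \subset S) && indep Cs I].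
have P0 : 0 < #|P|.
  by apply/card_gt0P; exists set0; rewrite inE sub0set; apply/forall_inP => y; rewrite inE.
have [I /andP [IS Ii] rankS] := eq_bigmax_cond (fun I : {set E} => #|I|) P0.
have xI : x \notin I by apply: contra xS; apply: (subsetP IS).
have xcl : x \notin Defs.closure Cs I.
  by apply: contra xS => /(subsetP (closureS Cs IS)); rewrite fS.
suff xIi : indep Cs (x |: I).
  have -> : rank Cs S = #|I| by rewrite /rank -rankS.
  have -> : #|I|.+1 = #|x |: I| by rewrite cardsU1 xI.
  apply: (@leq_bigmax_cond _ (fun I : {set E} => (I \subset T) && indep Cs I)
    (fun I => #|I|) (x |: I)).
  by rewrite subUset sub1set xT xIi (subset_trans IS ST).
apply/forall_inP => y; rewrite in_setU1 => /predU1P [-> | yI]; first by rewrite setU1K.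
have yx : y != x by apply: contraNneq xI => <-.
have -> : (x |: I) :\ y = x |: (I :\ y).
  by apply/setP => z; rewrite !(in_setD1, in_setU1); case: (z =P y) => // ->; rewrite (negbTE yx).
apply: contra xcl => ycl; rewrite -(setD1K yI).
by apply: closure_exchange => //; move/forall_inP: Ii; apply.
Qed.

Lemma rank_zs_cocircuit D : D \in Cs -> rank Cs (zs D) < rankOM Cs.
Proof.
move=> DC; have [x xD] := cocircuit_supp_neq0 DC.
by apply: (ltn_rank_flat (flat_zs DC) (flatT Cs) (subsetT _) (in_setT x)); rewrite in_zs_supp xD.
Qed.

Lemma cocircuit_zs_neq X Y : X \in Cs -> Y \in Cs -> X <> Y -> X <> opp Y ->
  exists2 k, k \in zs X & k \notin zs Y.
Proof.
move=> XC YC nXY nXoY; apply/subsetPn; rewrite /zs setCS; apply/negP => sYX.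
by case: (cocircuit_supp_eq YC XC sYX) => YX; [apply: nXY | apply: nXoY; rewrite YX oppK].
Qed.

Lemma coline_cocircuit_eq L X Y k : coline Cs L -> X \in Cs -> Y \in Cs ->
  L \subset zs X -> L \subset zs Y -> k \in zs X -> k \in zs Y -> k \notin L ->
  X = Y \/ X = opp Y.
Proof.
move=> [fL rL] XC YC LX LY kX kY kL.
have fXY : flat Cs (zs X :&: zs Y) by apply: flatI => //; apply: flat_zs.
have rLXY : rank Cs L < rank Cs (zs X :&: zs Y).
  by apply: (ltn_rank_flat fL fXY _ _ kL); rewrite ?subsetI ?LX ?LY // inE kX kY.
case: (boolP (zs X \subset zs Y)) => [|/subsetPn [x xX xY]].
  by rewrite /zs setCS => /(cocircuit_supp_eq YC XC) [->|->]; [left | right; rewrite oppK].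
have : rank Cs (zs X :&: zs Y) < rank Cs (zs X).
  by apply: (ltn_rank_flat fXY (flat_zs XC) (subsetIl _ _) xX); rewrite inE (negbTE xY) andbF.
by have := rank_zs_cocircuit XC; lia.
Qed.

End Cocircuits.

Section Pencils.
Variables (E : finType) (Cs : {set sv E}).
Hypothesis HOM : is_OM Cs.
Implicit Types (X Y Z : sv E).

Lemma comodular_coline X Y : comodular Cs X Y -> coline Cs (zs X :&: zs Y).
Proof. by case=> _ _ _ _ [_ []]; rewrite zs_svcomp. Qed.

Lemma comodular_of_coline X Y : X \in Cs -> Y \in Cs -> X <> Y -> X <> opp Y ->
  coline Cs (zs X :&: zs Y) -> comodular Cs X Y.
Proof.
move=> XC YC nXY nXoY [fL rL]; split=> //; split; last by rewrite zs_svcomp.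
by exists [:: X; Y]; rewrite /= XC YC svcompX0.
Qed.

Lemma comodular_sym X Y : comodular Cs X Y -> comodular Cs Y X.
Proof.
move=> cXY; have := comodular_coline cXY; case: cXY => XC YC nXY nXoY _.
rewrite setIC; apply: comodular_of_coline => // [/esym //|YX].
by apply: nXoY; rewrite YX oppK.
Qed.

Lemma comodular_oppl X Y : comodular Cs X Y -> comodular Cs (opp X) Y.
Proof.
move=> cXY; have := comodular_coline cXY; case: cXY => XC YC nXY nXoY _.
rewrite -zs_opp; apply: comodular_of_coline; rewrite ?(opp_cocircuit HOM) //.
  by move=> XY; apply: nXoY; rewrite -XY oppK.
by move=> oXY; apply: nXY; rewrite -[X]oppK oXY oppK.
Qed.

Lemma comodular_oppr X Y : comodular Cs X Y -> comodular Cs X (opp Y).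
Proof. by move=> /comodular_sym /comodular_oppl /comodular_sym. Qed.

(* Off the coline, the zero set of [Y] is met by no other cocircuit of the pencil. *)
Lemma conformal_zs_eq X Y Z k : coline Cs (zs X :&: zs Y) -> Y \in Cs -> Z \in Cs ->
  conformal Z X Y -> Z <> Y -> Z <> opp Y -> Y k = None -> X k <> None -> Z k = X k.
Proof.
move=> L YC ZC cf nZY nZoY Yk Xk.
case Zk: (Z k) => [u|]; first by case: (cf _ _ Zk) => [-> // | ]; rewrite Yk.
have kZ : k \in zs Z by rewrite in_zs Zk.
have kY : k \in zs Y by rewrite in_zs Yk.
have kL : k \notin zs X :&: zs Y by rewrite in_setI in_zs; apply/nandP; left; apply/eqP.
by case: (coline_cocircuit_eq HOM L ZC YC (conformal_zs cf) (subsetIr _ _) kZ kY kL).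
Qed.

Lemma elim_nonzero_at_agreement X Y Z a h t : comodular Cs X Y ->
  Z \in Cs -> Z a = None -> a \in sep X Y -> conformal Z X Y ->
  X h = Some t -> Y h = Some t -> Z h <> None.
Proof.
move=> cXY ZC Za aS cf Xh Yh Zh.
have L := comodular_coline cXY; case: cXY => XC YC nXY nXoY _.
have L' : coline Cs (zs Y :&: zs X) by rewrite setIC.
have [Xa Ya] := sep_neq0 aS.
have [nZX nZoX] := zero_neq Za Xa; have [nZY nZoY] := zero_neq Za Ya.
have noXoY : opp X <> opp Y by move=> oXY; apply: nXY; rewrite -[X]oppK oXY oppK.
have hS : h \in sep (opp X) Y by rewrite in_sep oppE Xh Yh /=.
have [W WC [Wh cW]] := cocircuit_elim HOM (opp_cocircuit HOM XC) YC noXoY hS.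
have LW : zs X :&: zs Y \subset zs W by rewrite -zs_opp; apply: conformal_zs cW.
have hL : h \notin zs X :&: zs Y by rewrite in_setI !in_zs Xh.
have hW : h \in zs W by rewrite in_zs Wh.
have hZ : h \in zs Z by rewrite in_zs Zh.
have [WZ|WZ] := coline_cocircuit_eq HOM L WC ZC LW (conformal_zs cf) hW hZ hL.
- have nYoX : Y <> opp X by move=> YX; apply: nXoY; rewrite YX oppK.
  have [k Yk Xk] := cocircuit_zs_neq HOM YC XC (nesym nXY) nYoX.
  move: Yk Xk; rewrite !in_zs => /eqP Yk; case Xk: (X k) => [s|] // _.
  have Zk : Z k = X k by rewrite (conformal_zs_eq L YC ZC cf nZY nZoY Yk) ?Xk.
  have Wk : W k = Some s by rewrite WZ Zk Xk.
  by case: (cW _ _ Wk); rewrite ?oppE ?Xk ?Yk //; case: s {Xk Zk Wk}.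
- have [k Xk Yk] := cocircuit_zs_neq HOM XC YC nXY nXoY.
  move: Xk Yk; rewrite !in_zs => /eqP Xk; case Yk: (Y k) => [s|] // _.
  have Zk : Z k = Y k by rewrite (conformal_zs_eq L' XC ZC (conformal_sym cf) nZX nZoX Xk) ?Yk.
  have Wk : W k = Some (~~ s) by rewrite WZ oppE Zk Yk.
  by case: (cW _ _ Wk); rewrite ?oppE ?Xk ?Yk //; case: s {Yk Zk Wk}.
Qed.

Lemma comodular_elim_result X Y a : comodular Cs X Y -> a \in sep X Y ->
  exists Z, elim_result Cs a X Y Z.
Proof.
move=> cXY aS; have L := comodular_coline cXY.
have L' : coline Cs (zs Y :&: zs X) by rewrite setIC.
case: (cXY) => XC YC _ nXoY _.
have [Z ZC [Za cf]] := cocircuit_elim HOM XC YC nXoY aS.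
have [Xa Ya] := sep_neq0 aS.
have [nZX nZoX] := zero_neq Za Xa; have [nZY nZoY] := zero_neq Za Ya.
exists Z; split=> // h; rewrite in_sep svcompE.
case Xh: (X h) => [t|]; case Yh: (Y h) => [t'|] /= hS.
- have tt' : t' = t by move: hS; case: t {Xh}; case: t' {Yh}.
  subst t'; case Zh: (Z h) => [u|].
    by case: (cf _ _ Zh); rewrite ?Xh ?Yh => -[->].
  by case: (elim_nonzero_at_agreement cXY ZC Za aS cf Xh Yh).
- by rewrite (conformal_zs_eq L YC ZC cf nZY nZoY Yh) ?Xh.
- by rewrite (conformal_zs_eq L' XC ZC (conformal_sym cf) nZX nZoX Xh) ?Yh.
- exact: conformal_zero cf Xh Yh.
Qed.

Lemma arrow_opp a b X Y : arrow Cs a b X Y -> arrow Cs a b (opp Y) (opp X).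
Proof.
case=> cXY XYa Xa [Z [eZ Zb]]; split.
- exact: comodular_oppr (comodular_oppl (comodular_sym cXY)).
- by rewrite !oppE -XYa.
- by move: Xa; rewrite oppE -XYa; case: (X a).
- by exists Z; split=> //; rewrite oppK; apply: elim_result_sym.
Qed.

Lemma arrow_oppE a b X Y : arrow Cs a b X Y <-> arrow Cs a b (opp Y) (opp X).
Proof. by split=> [|/arrow_opp]; [exact: arrow_opp | rewrite !oppK]. Qed.

End Pencils.

Section ModularTriple.
Variables (E : finType) (Cs : {set sv E}) (C X Y X1 Y1 : sv E) (g e : E).
Hypotheses (HOM : is_OM Cs) (rank3 : 3 <= rankOM Cs).
Hypotheses (cCX : comodular Cs C X) (cCY : comodular Cs C Y) (cXY : comodular Cs X Y).
Hypotheses (fF : flat Cs (zs C :&: (zs X :&: zs Y)))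
  (rF : rank Cs (zs C :&: (zs X :&: zs Y)) = rankOM Cs - 3).
Hypotheses (Cg : C g = Some true) (Xg : X g = Some true) (Yg : Y g = Some true).
Hypotheses (Ce : C e <> None) (Xe : X e = None) (Ye : Y e = None).
Hypotheses (eX1 : elim_result Cs g (opp X) C X1) (eY1 : elim_result Cs g (opp Y) C Y1).

Let F := zs C :&: (zs X :&: zs Y).

Lemma exists_off_F (S : {set E}) : F \subset S -> rank Cs S = rankOM Cs - 2 ->
  exists2 k, k \in S & k \notin F.
Proof.
move=> FS rS; apply/subsetPn; apply/negP => SF.
have SF' : S = F by apply/eqP; rewrite eqEsubset SF FS.
by move: rS; rewrite SF' /F rF; lia.
Qed.

Lemma elim_opp_C_zero X' X1' h : elim_result Cs g (opp X') C X1' ->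
  C h = None -> X' h = None -> X1' h = None.
Proof. by move=> eX1' Ch X'h; rewrite (elim_result_zs_left eX1') ?oppE ?X'h. Qed.

Lemma zs_sub_elim_opp_C X' X1' : elim_result Cs g (opp X') C X1' ->
  zs C :&: zs X' \subset zs X1'.
Proof.
move=> eX1'; apply/subsetP => h; rewrite in_setI !in_zs => /andP [/eqP Ch /eqP X'h].
by rewrite (elim_opp_C_zero eX1').
Qed.

Lemma zs_X1_neq_Y1 : zs X1 != zs Y1.
Proof.
apply/eqP => X1Y1; case: (eX1) => X1C X1g _; case: (cCX) => CC _ _ _ _.
have [k kCY kF] : exists2 k, k \in zs C :&: zs Y & k \notin F.
  apply: exists_off_F; last by case: (comodular_coline cCY).
  by rewrite setIS ?subsetIr.
have kX1 : k \in zs X1 by rewrite X1Y1 (subsetP (zs_sub_elim_opp_C eY1)).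
have kC : k \in zs C by move: kCY; rewrite in_setI => /andP [].
have kCX : k \notin zs C :&: zs X.
  by move: kCY kF; rewrite /F !in_setI => /andP [-> ->]; rewrite andbT.
have [X1C'|X1oC] := coline_cocircuit_eq HOM (comodular_coline cCX) X1C CC
  (zs_sub_elim_opp_C eX1) (subsetIl _ _) kX1 kC kCX.
- by move: X1g; rewrite X1C' Cg.
- by move: X1g; rewrite X1oC oppE Cg.
Qed.

Lemma comodular_X1_Y1 : comodular Cs X1 Y1.
Proof.
case: (eX1) => X1C X1g _; case: (eY1) => Y1C Y1g _.
have nX1Y1 : X1 <> Y1 by move=> X1Y1; move: zs_X1_neq_Y1; rewrite X1Y1 eqxx.
have nX1oY1 : X1 <> opp Y1 by move=> X1Y1; move: zs_X1_neq_Y1; rewrite X1Y1 zs_opp eqxx.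
apply: comodular_of_coline => //; set M := zs X1 :&: zs Y1.
have fM : flat Cs M by apply: flatI => //; apply: flat_zs.
split=> //.
have FM : F \subset M.
  rewrite subsetI (subset_trans _ (zs_sub_elim_opp_C eX1)) ?setIS ?subsetIl //=.
  by rewrite (subset_trans _ (zs_sub_elim_opp_C eY1)) ?setIS ?subsetIr.
have rFM : rank Cs F < rank Cs M.
  apply: (ltn_rank_flat HOM fF fM FM (x := g)); first by rewrite in_setI !in_zs X1g Y1g.
  by rewrite !in_setI !in_zs Cg.
have [x xX1 xY1] := cocircuit_zs_neq HOM X1C Y1C nX1Y1 nX1oY1.
have rMX1 : rank Cs M < rank Cs (zs X1).
  apply: (ltn_rank_flat HOM fM (flat_zs X1C) (subsetIl _ _) xX1).
  by rewrite in_setI (negbTE xY1) andbF.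
by move: rFM rMX1 (rank_zs_cocircuit HOM X1C); rewrite /F rF; lia.
Qed.

Lemma zs_XY_sub_elim_Y1X1 Z : elim_result Cs e (opp Y1) X1 Z -> zs X :&: zs Y \subset zs Z.
Proof.
move=> eZ; case: (eZ) => ZC Ze _; apply: contraT => /subsetPn [x xXY xZ].
have [fXY rXY] := comodular_coline cXY.
set G := (zs X :&: zs Y) :&: zs Z.
have fG : flat Cs G by apply: flatI.
have FZ : F \subset zs Z.
  apply/subsetP => h; rewrite !in_setI !in_zs => /and3P [/eqP Ch /eqP Xh /eqP Yh].
  by rewrite (elim_result_zs_left eZ) ?oppE ?(elim_opp_C_zero eX1) ?(elim_opp_C_zero eY1).
have rFG : rank Cs F < rank Cs G.
  apply: (ltn_rank_flat HOM fF fG (x := e)).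
  - by rewrite subsetI FZ andbT subsetIr.
  - by rewrite !in_setI !in_zs Xe Ye Ze.
  - by rewrite in_setI in_zs; apply/nandP; left; apply/eqP.
have : rank Cs G < rank Cs (zs X :&: zs Y).
  by apply: (ltn_rank_flat HOM fG fXY (subsetIl _ _) xXY); rewrite in_setI (negbTE xZ) andbF.
by move: rFG; rewrite /F rF rXY; lia.
Qed.

(* Both are the cocircuit of the pencil through [zs X :&: zs Y] vanishing at [g]; the sign
   is read off at a point of [zs C :&: zs X] outside [F]. *)
Lemma elim_XY_eq_elim_Y1X1 W Z : elim_result Cs g (opp X) Y W ->
  elim_result Cs e (opp Y1) X1 Z -> W = Z.
Proof.
move=> eW eZ; case: (eW) => WC Wg _; case: (eZ) => ZC _ _.
case: (eX1) => _ X1g _; case: (eY1) => _ Y1g _.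
have LW : zs X :&: zs Y \subset zs W.
  apply/subsetP => h; rewrite in_setI !in_zs => /andP [/eqP Xh /eqP Yh].
  by rewrite (elim_result_zs_left eW) ?oppE ?Xh ?Yh.
have gZ : g \in zs Z.
  by rewrite in_zs (elim_result_zs_left eZ) ?oppE ?X1g ?Y1g.
have gW : g \in zs W by rewrite in_zs Wg.
have gXY : g \notin zs X :&: zs Y by rewrite in_setI in_zs Xg.
have [//|WoZ] := coline_cocircuit_eq HOM (comodular_coline cXY) WC ZC LW
  (zs_XY_sub_elim_Y1X1 eZ) gW gZ gXY.
have [k kCX kF] : exists2 k, k \in zs C :&: zs X & k \notin F.
  apply: exists_off_F; last by case: (comodular_coline cCX).
  by rewrite setIS ?subsetIl.
move: kCX kF; rewrite /F !in_setI !in_zs => /andP [/eqP Ck /eqP Xk].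
rewrite Ck Xk /=; case Yk: (Y k) => [t|] // _.
have Wk : W k = Some t by rewrite (elim_result_zs_left eW) ?oppE ?Xk.
have Y1k : Y1 k = Some (~~ t) by rewrite (elim_result_zs_right eY1) ?oppE ?Yk.
have X1k : X1 k = None := elim_opp_C_zero eX1 Ck Xk.
have Zk : Z k = Some t by rewrite (elim_result_zs_right eZ X1k) oppE Y1k /= negbK.
by move: Wk; rewrite WoZ oppE Zk; case: t {Yk Y1k Zk}.
Qed.

Lemma modular_triple_arrows f :
  edge Cs (svcomp X1 Y1) /\
  (arrow Cs g f X Y <-> arrow Cs e f Y1 X1) /\
  (arrow Cs e f Y1 X1 <-> arrow Cs e f (opp X1) (opp Y1)).
Proof.
have cX1Y1 := comodular_X1_Y1; have cY1X1 := comodular_sym cX1Y1.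
have [X1e Y1e] : X1 e = C e /\ Y1 e = C e.
  by rewrite (elim_result_zs_left eX1) ?(elim_result_zs_left eY1) ?oppE ?Xe ?Ye.
split; first by case: cX1Y1.
split; last exact: arrow_oppE.
split=> [[_ _ _ [W [eW Wf]]] | [_ _ _ [Z [eZ Zf]]]].
- have eS : e \in sep (opp Y1) X1.
    by rewrite in_sep oppE Y1e X1e; case: (C e) Ce => // -[].
  have [Z eZ] := comodular_elim_result HOM (comodular_oppl HOM cY1X1) eS.
  split=> //; [by rewrite X1e Y1e | by rewrite Y1e |].
  by exists Z; split=> //; rewrite -(elim_XY_eq_elim_Y1X1 eW eZ).
- have gS : g \in sep (opp X) Y by rewrite in_sep oppE Xg Yg.
  have [W eW] := comodular_elim_result HOM (comodular_oppl HOM cXY) gS.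
  split=> //; [by rewrite Xg Yg | by rewrite Xg |].
  by exists W; split=> //; rewrite (elim_XY_eq_elim_Y1X1 eW eZ).
Qed.

End ModularTriple.

Theorem lemma4p3 (E : finType) (Cs : {set sv E}) (g f e : E)
    (C X Y X1 Y1 : sv E) :
  is_OM Cs -> g <> f -> ~ loop Cs g -> ~ coloop Cs f ->
  3 <= rankOM Cs ->
  comodular Cs C X -> comodular Cs C Y -> comodular Cs X Y ->
  flat Cs (zs (svcomp C (svcomp X Y))) ->
  rank Cs (zs (svcomp C (svcomp X Y))) = rankOM Cs - 3 ->
  C g = Some true -> X g = Some true -> Y g = Some true ->
  e \in supp C -> svcomp X Y e = None ->
  elim_result Cs g (opp X) C X1 ->
  elim_result Cs g (opp Y) C Y1 ->
  edge Cs (svcomp X1 Y1) /\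
  (arrow Cs g f X Y <-> arrow Cs e f Y1 X1) /\
  (arrow Cs e f Y1 X1 <-> arrow Cs e f (opp X1) (opp Y1)).
Proof.
move=> HOM _ _ _ rank3 cCX cCY cXY fF rF Cg Xg Yg eC eXY eX1 eY1.
rewrite !zs_svcomp in fF rF.
have [Xe Ye] : X e = None /\ Y e = None by move: eXY; rewrite svcompE; case: (X e).
have Ce : C e <> None by apply/eqP; rewrite -in_supp.
exact: (modular_triple_arrows HOM rank3 cCX cCY cXY fF rF Cg Xg Yg Ce Xe Ye eX1 eY1).
Qed.
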